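(* Let $(R,\mathfrak m)$ be a Noetherian local ring, $M$ a finitely generated $R$-module, and $N \subseteq H^0_{\mathfrak m}(M)$ a submodule (necessarily of finite length). Then $\mathfrak b(M) \subseteq \mathfrak b(M/N)$.
   Context: For a finitely generated $R$-module $L$ of dimension $d$, define $$\mathfrak b(L) = \bigcap_{\underline{x}}\ \bigcap_{i=1}^{d} \mathrm{Ann}_R\Big( \big((x_1,\dots,x_{i-1})L :_L x_i\big)/(x_1,\dots,x_{i-1})L \Big),$$ where $\underline{x}=x_1,\dots,x_d$ runs over all systems of parameters of $L$. $H^i_{\mathfrak m}(-)$ denotes local cohomology with support in $\mathfrak m$. *)

From HB Require Import structures.
From mathcomp Require Import all_boot all_order all_algebra.
Set Implicit Arguments. Unset Strict Implicit. Unset Printing Implicit Defensive.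
Import GRing.Theory.
Local Open Scope ring_scope.

Section CommAlg.
Variable R : comNzRingType.

Definition is_ideal (I : R -> Prop) : Prop :=
  I 0 /\ (forall x y, I x -> I y -> I (x + y)) /\ (forall r x, I x -> I (r * x)).

Definition prime_ideal (P : R -> Prop) : Prop :=
  is_ideal P /\ ~ P 1 /\ (forall x y, P (x * y) -> P x \/ P y).

Definition noetherian_ring : Prop :=
  forall I : R -> Prop, is_ideal I ->
    exists s : seq R, forall x, I x <->
      exists c : 'I_(size s) -> R, x = \sum_(i < size s) c i * s`_i.

(* (R, m) is local with maximal ideal m : m is a proper ideal and every
   element outside m is a unit (so m is the unique maximal ideal). *)
Definition local_with_max (m : R -> Prop) : Prop :=
  is_ideal m /\ ~ m 1 /\ (forall x, ~ m x -> exists y, x * y = 1).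

Definition pstrict_sub {T} (A B : T -> Prop) : Prop :=
  (forall x, A x -> B x) /\ exists x, B x /\ ~ A x.

Variable L : lmodType R.

Definition is_submod (P : L -> Prop) : Prop :=
  P 0 /\ (forall u v, P u -> P v -> P (u + v)) /\ (forall r v, P v -> P (r *: v)).

Definition fin_gen_mod : Prop :=
  exists gs : seq L, forall v : L,
    exists c : 'I_(size gs) -> R, v = \sum_(i < size gs) c i *: gs`_i.

Definition ann_mod (r : R) : Prop := forall v : L, r *: v = 0.

Definition prime_chain_over_ann (k : nat) (P : nat -> R -> Prop) : Prop :=
  (forall i, (i <= k)%N -> prime_ideal (P i) /\ (forall r, ann_mod r -> P i r)) /\
  (forall i, (i < k)%N -> pstrict_sub (P i) (P i.+1)).

(* dim L = d  (Krull dimension of R / Ann(L)); no d exists for L = 0 *)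
Definition mod_dim (d : nat) : Prop :=
  (exists P, prime_chain_over_ann d P) /\ ~ (exists P, prime_chain_over_ann d.+1 P).

Definition seq_mul_mod (xs : seq R) (v : L) : Prop :=
  exists ls : 'I_(size xs) -> L, v = \sum_(i < size xs) xs`_i *: ls i.

(* L / K has finite length : lengths of strict chains of submodules of L/K,
   i.e. of submodules of L containing K, are bounded *)
Definition quot_fin_length (K : L -> Prop) : Prop :=
  exists n : nat, forall (k : nat) (C : nat -> L -> Prop),
    (forall i, (i <= k)%N -> is_submod (C i) /\ (forall v, K v -> C i v)) ->
    (forall i, (i < k)%N -> pstrict_sub (C i) (C i.+1)) ->
    (k <= n)%N.

Definition is_sop (m : R -> Prop) (xs : seq R) : Prop :=
  mod_dim (size xs) /\ (forall i, (i < size xs)%N -> m xs`_i) /\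
  quot_fin_length (seq_mul_mod xs).

(* b(L) : r lies in b(L) iff for every s.o.p. x_1..x_d and every i,
   r annihilates ((x_1..x_{i-1})L :_L x_i) / (x_1..x_{i-1})L *)
Definition b_ideal (m : R -> Prop) (r : R) : Prop :=
  forall xs : seq R, is_sop m xs ->
    forall i, (i < size xs)%N ->
      forall v : L, seq_mul_mod (take i xs) (xs`_i *: v) ->
        seq_mul_mod (take i xs) (r *: v).

(* H^0_m(L) = elements killed by some power m^n of m *)
Definition H0m (m : R -> Prop) (v : L) : Prop :=
  exists n : nat, forall s : seq R, size s = n ->
    (forall i, (i < n)%N -> m s`_i) -> (\prod_(a <- s) a) *: v = 0.

End CommAlg.

(* Let r be in b(M), let x_1, ..., x_d be a system of parameters of M/N, y = x_i, and let
   w in M/N satisfy y w in (x_1, ..., x_(i-1))(M/N).  Lifting w to v and y w to u in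
   (x_1, ..., x_(i-1))M, the element y v - u lies in N, which is killed by a power of m;
   so y^e (y v - u) = 0 and y^(e+1) v lies in (x_1, ..., x_(i-1))M.  The sequence
   x_1, ..., y^(e+1), ..., x_d is a system of parameters of M: a prime containing Ann M
   and missing some element x of m also contains Ann(M/N), because x^E Ann(M/N) kills M,
   so dim M = dim M/N; and N, generated by finitely many elements killed by powers of m,
   has finite length, so M/(x_1, ..., y^(e+1), ..., x_d)M has finite length.  As r is in
   b(M), r v lies in (x_1, ..., x_(i-1))M, and mapping to M/N gives the claim for w. *)

From Stdlib Require Import Classical ClassicalEpsilon.
From HB Require Import structures.
From mathcomp Require Import all_boot all_order all_algebra.
From mathcomp Require Import zify ring.
Import GRing.Theory.
Local Open Scope ring_scope.

Definition psubset {T} (A B : T -> Prop) := forall x, A x -> B x.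
Definition pequiv {T} (A B : T -> Prop) := psubset A B /\ psubset B A.

Lemma pequiv_refl {T} (A : T -> Prop) : pequiv A A.
Proof. by split. Qed.

Lemma forall_nth_mem {T : eqType} (x0 : T) (P : T -> Prop) (s : seq T) :
  (forall i, (i < size s)%N -> P (nth x0 s i)) <-> {in s, forall x, P x}.
Proof.
split=> [H x /(nthP x0) [i hi <-] | H i hi]; first exact: H.
by apply: H; rewrite mem_nth.
Qed.

Section Submodules.
Context {R : comNzRingType} {L : lmodType R}.
Implicit Types (A B : L -> Prop) (zs : seq L).

Definition total_sub : L -> Prop := fun _ => True.

Definition sum_sub A B : L -> Prop := fun z => exists a b, A a /\ B b /\ z = a + b.

Definition cyclic_sub (z : L) : L -> Prop := fun v => exists a : R, v = a *: z.

Fixpoint lin_span zs : L -> Prop :=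
  if zs is z :: zs' then fun v => exists a u, lin_span zs' u /\ v = a *: z + u
  else fun v => v = 0.

Lemma submod0 {A} : is_submod A -> A 0.
Proof. by case. Qed.

Lemma submodD {A u v} : is_submod A -> A u -> A v -> A (u + v).
Proof. by move=> [_ [H _]]; apply: H. Qed.

Lemma submodZ {A r v} : is_submod A -> A v -> A (r *: v).
Proof. by move=> [_ [_ H]]; apply: H. Qed.

Lemma submodN {A v} : is_submod A -> A v -> A (- v).
Proof. by move=> SA Av; rewrite -scaleN1r; exact: (submodZ SA Av). Qed.

Lemma submodB {A u v} : is_submod A -> A u -> A v -> A (u - v).
Proof. by move=> SA Au Av; apply: (submodD SA Au); apply: submodN. Qed.

Lemma submod_sum {A} {I : finType} {F : I -> L} :
  is_submod A -> (forall i, A (F i)) -> A (\sum_i F i).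
Proof.
move=> SA AF; apply: (big_ind A) => //; first exact: (submod0 SA).
by move=> u v; apply: (submodD SA).
Qed.

Lemma submod_total : is_submod total_sub.
Proof. by []. Qed.

Lemma submod_sum_sub {A B} : is_submod A -> is_submod B -> is_submod (sum_sub A B).
Proof.
move=> SA SB; split.
  by exists 0, 0; rewrite addr0; split; [exact: (submod0 SA) | split; [exact: (submod0 SB) |]].
split=> [u v [a [b [Aa [Bb ->]]]] [a' [b' [Aa' [Bb' ->]]]] | r v [a [b [Aa [Bb ->]]]]].
  exists (a + a'), (b + b'); rewrite addrACA.
  by split; [exact: (submodD SA Aa Aa') | split; [exact: (submodD SB Bb Bb') |]].
exists (r *: a), (r *: b); rewrite scalerDr.
by split; [exact: (submodZ SA Aa) | split; [exact: (submodZ SB Bb) |]].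
Qed.

Lemma submod_meet {A B} : is_submod A -> is_submod B -> is_submod (fun v => A v /\ B v).
Proof.
move=> SA SB; split; first by split; [exact: (submod0 SA) | exact: (submod0 SB)].
split=> [u v [Au Bu] [Av Bv] | r v [Av Bv]].
  by split; [exact: (submodD SA Au Av) | exact: (submodD SB Bu Bv)].
by split; [exact: (submodZ SA Av) | exact: (submodZ SB Bv)].
Qed.

Lemma submod_cyclic z : is_submod (cyclic_sub z).
Proof.
split; first by exists 0; rewrite scale0r.
split=> [u v [a ->] [b ->] | r v [a ->]]; first by exists (a + b); rewrite scalerDl.
by exists (r * a); rewrite scalerA.
Qed.

Lemma submod_span zs : is_submod (lin_span zs).
Proof.
elim: zs => [|z zs IH] /=.
  by split=> //; split=> [u v -> ->|r v ->]; rewrite ?addr0 ?scaler0.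
split; first by exists 0, 0; rewrite scale0r addr0; split; first exact: submod0 IH.
split=> [u v [a [u1 [H1 ->]]] [b [v1 [H2 ->]]] | r v [a [u1 [H1 ->]]]].
  by exists (a + b), (u1 + v1); rewrite scalerDl addrACA; split; first apply: submodD.
by exists (r * a), (r *: u1); rewrite scalerDr scalerA; split; first apply: submodZ.
Qed.

Lemma sum_subl {A B} : is_submod B -> psubset A (sum_sub A B).
Proof. by move=> SB a Aa; exists a, 0; rewrite addr0; do 2!split=> //; exact: (submod0 SB). Qed.

Lemma sum_subSl {A A'} B : psubset A A' -> psubset (sum_sub A B) (sum_sub A' B).
Proof. by move=> AA' _ [a [b [Aa [Bb ->]]]]; exists a, b; split; first exact: AA'. Qed.

Lemma sum_subSr A {B B'} : psubset B B' -> psubset (sum_sub A B) (sum_sub A B').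
Proof. by move=> BB' _ [a [b [Aa [Bb ->]]]]; exists a, b; split=> //; split; first exact: BB'. Qed.

Lemma span_min {A zs} : is_submod A -> {in zs, forall z, A z} -> psubset (lin_span zs) A.
Proof.
move=> SA; elim: zs => [|z zs IH] Azs v /=; first by move=> ->; apply: submod0.
move=> [a [u [Su ->]]]; apply: (submodD SA).
  by apply: (submodZ SA); apply: Azs; rewrite mem_head.
by apply: IH Su => x zs_x; apply: Azs; rewrite in_cons zs_x orbT.
Qed.

Lemma span_map_sum {T : Type} (g : T -> L) (x0 : T) (ys : seq T) (c : 'I_(size ys) -> R) :
  lin_span (map g ys) (\sum_(i < size ys) c i *: g (nth x0 ys i)).
Proof.
elim: ys c => [|y ys IH] c /=; first by rewrite big_ord0.
rewrite big_ord_recl; exists (c ord0), (\sum_(i < size ys) c (lift ord0 i) *: g (nth x0 ys i)).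
by split; first exact: (IH (fun i => c (lift ord0 i))).
Qed.

Lemma span_cat zs1 zs2 u v : lin_span zs1 u -> lin_span zs2 v -> lin_span (zs1 ++ zs2) (u + v).
Proof.
elim: zs1 u => [|z zs IH] u /=; first by move=> -> H; rewrite add0r.
by move=> [a [u1 [H1 ->]]] H2; exists a, (u1 + v); rewrite addrA; split; first exact: IH.
Qed.

Lemma fin_gen_span : fin_gen_mod L -> exists gs, forall v, lin_span gs v.
Proof.
move=> [gs hgs]; exists gs => v; have [c ->] := hgs v.
by have := span_map_sum id 0 gs c; rewrite map_id.
Qed.

End Submodules.

Lemma psubset_nstrict {T} {A B : T -> Prop} :
  psubset A B -> ~ pstrict_sub A B -> psubset B A.
Proof. by move=> AB nAB x Bx; apply: NNPP => nAx; apply: nAB; split=> //; exists x. Qed.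

Section Lengths.
Context {R : comNzRingType} {L : lmodType R}.
Implicit Types (A B C : L -> Prop) (X Y : nat -> L -> Prop).

Definition chain_between A B X k := forall i, (i <= k)%N ->
  is_submod (X i) /\ psubset A (X i) /\ psubset (X i) B.

(* [length_le A B n]: the module B/A has length at most n. *)
Definition length_le A B n := forall X k, chain_between A B X k ->
  (forall i, (i < k)%N -> pstrict_sub (X i) (X i.+1)) -> (k <= n)%N.

Fixpoint strict_steps X k : nat :=
  if k is k'.+1 then (strict_steps X k' +
    if excluded_middle_informative (pstrict_sub (X k') (X k)) then 1 else 0)%N
  else 0%N.

Lemma length_le_equiv {A A' B B' n} :
  pequiv A A' -> pequiv B B' -> length_le A B n -> length_le A' B' n.
Proof.
move=> [AA' _] [_ B'B] H X k HX; apply: H => i hi.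
by have [SX [A'X XB']] := HX i hi; split; [|split=> x hx]; [| apply/A'X/AA' | apply/B'B/XB'].
Qed.

Lemma length_le_refl A : length_le A A 0.
Proof.
move=> X [|k] HX HS //; have [_ [x [X1x nX0x]]] := HS 0%N isT.
by have [_ [AX0 _]] := HX 0%N isT; have [_ [_ X1A]] := HX 1%N isT; case: nX0x; apply/AX0/X1A.
Qed.

Lemma strict_subchain {A B X k} : chain_between A B X k ->
  (forall i, (i < k)%N -> psubset (X i) (X i.+1)) ->
  exists Y, [/\ chain_between A B Y (strict_steps X k),
    (forall i, (i < strict_steps X k)%N -> pstrict_sub (Y i) (Y i.+1))
    & pequiv (Y (strict_steps X k)) (X k)].
Proof.
elim: k => [|k IH] HX HM.
  by exists X; split=> //=; split.
have [Y [HY1 HY2 [YX XY]]] := IH (fun i hi => HX i (leqW hi)) (fun i hi => HM i (ltnW hi)).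
have Xsub := HM k (ltnSn k).
rewrite /=; move: (strict_steps X k) HY1 HY2 YX XY => c HY1 HY2 YX XY.
case: excluded_middle_informative => [strict | nstrict]; last first.
  exists Y; rewrite addn0; split=> //; split=> v hv; first exact/Xsub/YX.
  exact: XY _ (psubset_nstrict Xsub nstrict _ hv).
have [_ [x [Xx nXx]]] := strict.
exists (fun j => if (j <= c)%N then Y j else X k.+1); rewrite addn1; split.
- by move=> i hi; case: ifP => Hic; [apply: HY1 | apply: HX].
- move=> i hi; have [Hlt|->] : (i < c)%N \/ i = c by lia.
    by rewrite /= (ltnW Hlt) Hlt; apply: HY2.
  rewrite /= leqnn ltnn; split; first by move=> y /YX /Xsub.
  by exists x; split=> // /YX.
- by rewrite /= ltnn; split.
Qed.

Lemma strict_steps_le {A B n X k} : length_le A B n -> chain_between A B X k ->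
  (forall i, (i < k)%N -> psubset (X i) (X i.+1)) -> (strict_steps X k <= n)%N.
Proof. by move=> H HX HM; have [Y [HY1 HY2 _]] := strict_subchain HX HM; apply: H HY1 HY2. Qed.

Lemma strict_steps_cover X Y k :
  (forall i, (i < k)%N -> pstrict_sub (X i) (X i.+1) \/ pstrict_sub (Y i) (Y i.+1)) ->
  (k <= strict_steps X k + strict_steps Y k)%N.
Proof.
elim: k => [|k IH] H //=.
have := IH (fun i hi => H i (ltnW hi)).
case: (H k (ltnSn k)) => hs.
all: do 2 case: excluded_middle_informative => /= *; by [lia | contradiction].
Qed.

Lemma modular_sub {A B C} : is_submod A -> is_submod B -> is_submod C -> psubset A C ->
  psubset (fun v => C v /\ B v) A -> psubset (sum_sub C B) (sum_sub A B) -> psubset C A.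
Proof.
move=> SA SB SC AC CBA CBAB z Cz.
have CBz : sum_sub C B z.
  by exists z, 0; rewrite addr0; split=> //; split=> //; exact: (submod0 SB).
have [d [b [Ad [Bb ez]]]] := CBAB z CBz.
have Cb : C b.
  have -> : b = z - d by rewrite ez addrC addKr.
  by apply: (submodB SC) => //; apply: AC.
by rewrite ez; apply: (submodD SA) => //; apply: CBA.
Qed.

(* A strict step of a chain between A and C stays strict after intersecting with B or
   after adding B (modular law), giving a chain between A and B or one between B and C. *)
Lemma length_le_trans {A B C n1 n2} : is_submod B -> is_submod C ->
  psubset A B -> psubset B C ->
  length_le A B n1 -> length_le B C n2 -> length_le A C (n1 + n2).
Proof.
move=> SB SC AB BC H1 H2 X k HX HS.
have HM i : (i < k)%N -> psubset (X i) (X i.+1) by move=> hi; case: (HS i hi).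
pose E i v := X i v /\ B v.
pose F i := sum_sub (X i) B.
have stepsE : (strict_steps E k <= n1)%N.
  apply: (strict_steps_le H1) => [i hi | i hi v [Xv Bv]]; last by split=> //; apply: HM.
  have [SXi [AX XC]] := HX i hi; split; first exact: submod_meet.
  by split=> [v Av | v []]; first by split; [apply: AX | apply: AB].
have stepsF : (strict_steps F k <= n2)%N.
  apply: (strict_steps_le H2) => [i hi | i hi v [a [b [Xa [Bb ->]]]]].
    have [SXi [AX XC]] := HX i hi; split; first exact: submod_sum_sub.
    split=> [v Bv | v [a [b [Xa [Bb ->]]]]].
      by exists 0, v; rewrite add0r; split=> //; exact: (submod0 SXi).
    by apply: (submodD SC); [apply: XC | apply: BC].
  by exists a, b; split=> //; apply: HM.
suff: (k <= strict_steps E k + strict_steps F k)%N by lia.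
apply: strict_steps_cover => i hi; apply: NNPP => /not_or_and [nE nF].
have [_ [z [Xz nXz]]] := HS i hi.
have [SXi _] := HX i (ltnW hi); have [SXi1 _] := HX i.+1 hi.
have EE : psubset (E i.+1) (E i).
  by apply: (psubset_nstrict _ nE) => v [Xv Bv]; split=> //; apply: HM.
have FF : psubset (F i.+1) (F i).
  by apply: (psubset_nstrict _ nF) => v [a [b [Xa [Bb ->]]]]; exists a, b; split=> //; apply: HM.
by apply/nXz/(modular_sub SXi SB SXi1 (HM i hi) _ FF) => // v /EE [].
Qed.

End Lengths.

Section LinearImages.
Context {R : comNzRingType} {L L' : lmodType R} (g : {linear L -> L'}).

Definition range_sub : L' -> Prop := fun w => exists u, w = g u.

Lemma length_le_preimage {K K' n} : is_submod K' -> (forall u, K u -> K' (g u)) ->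
  length_le K total_sub n -> length_le K' (sum_sub K' range_sub) n.
Proof.
move=> SK' gK H X k HX HS.
apply: (H (fun i u => X i (g u))) => [i hi | i hi].
  have [SXi [K'X _]] := HX i hi; split; last by split=> // u /gK /K'X.
  split; first by rewrite linear0; exact: (submod0 SXi).
  split=> [u v Xu Xv | r v Xv]; first by rewrite linearD; exact: (submodD SXi).
  by rewrite linearZZ; exact: (submodZ SXi).
have [Xsub [z [Xz nXz]]] := HS i hi; split=> [u /Xsub //|].
have [SXi1 [K'X1 XK'1]] := HX i.+1 hi; have [SXi [K'X _]] := HX i (ltnW hi).
have [k' [_ [K'k' [[u ->] ez]]]] := XK'1 z Xz.
exists u; split.
  have -> : g u = z - k' by rewrite ez addrC addKr.
  by apply: (submodB SXi1) => //; apply: K'X1.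
by move=> Xgu; apply: nXz; rewrite ez; apply: (submodD SXi) => //; apply: K'X.
Qed.

Lemma length_le_image {K K' n} : (forall u, g u = 0 -> K u) ->
  (forall w, K' w -> exists2 u, K u & g u = w) ->
  length_le K' total_sub n -> length_le K total_sub n.
Proof.
move=> kerK K'gK H X k HX HS.
apply: (H (fun i w => exists2 u, X i u & w = g u)) => [i hi | i hi].
  have [SXi [KX _]] := HX i hi; split; last first.
    by split=> // w /K'gK [u /KX Xu <-]; exists u.
  split; first by exists 0; [exact: (submod0 SXi) | rewrite linear0].
  split=> [_ _ [u Xu ->] [v Xv ->] | r _ [v Xv ->]].
    by exists (u + v); [apply: (submodD SXi) | rewrite linearD].
  by exists (r *: v); [apply: (submodZ SXi) | rewrite linearZZ].
have [Xsub [z [Xz nXz]]] := HS i hi.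
split=> [_ [u /Xsub Xu ->] | ]; first by exists u.
have [SXi [KX _]] := HX i (ltnW hi).
exists (g z); split=> [|[d Xd edz]]; first by exists z.
have Kzd : K (z - d) by apply: kerK; rewrite linearB edz subrr.
by apply: nXz; rewrite -(subrK d z); apply: (submodD SXi) => //; apply: KX.
Qed.

End LinearImages.

Lemma length_le_cyclic_max {R : comNzRingType} {L : lmodType R} {m : R -> Prop}
    {B : L -> Prop} {z : L} :
  local_with_max m -> is_submod B -> (forall a, m a -> B (a *: z)) ->
  length_le B (sum_sub B (cyclic_sub z)) 1.
Proof.
move=> [_ [_ unit]] SB mB X [|[|k]] HX HS //.
have [_ [z1 [X1z1 nX0z1]]] := HS 0%N isT.
have [_ [z2 [X2z2 nX1z2]]] := HS 1%N isT.
have [SX0 [BX0 _]] := HX 0%N isT; have [SX1 [BX1 X1Bz]] := HX 1%N isT.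
have [_ [_ X2Bz]] := HX 2%N isT.
have [b [_ [Bb [[a ->] ez1]]]] := X1Bz z1 X1z1.
have [ma | nma] := classic (m a).
  by case: nX0z1; rewrite ez1; apply: (submodD SX0); apply: BX0 => //; apply: mB.
have [c ac] := unit a nma.
have X1z : X 1%N z.
  have -> : z = c *: (z1 - b) by rewrite ez1 addrC addKr scalerA mulrC ac scale1r.
  by apply: (submodZ SX1); apply: (submodB SX1) => //; apply: BX1.
have [b' [_ [Bb' [[a' ->] ez2]]]] := X2Bz z2 X2z2.
by case: nX1z2; rewrite ez2; apply: (submodD SX1); [apply: BX1 | apply: (submodZ SX1)].
Qed.

Lemma noetherian_ideal_gens {R : comNzRingType} {I : R -> Prop} :
  noetherian_ring R -> is_ideal I ->
  exists ys : seq R, {in ys, forall y, I y} /\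
    forall x, I x -> exists c : 'I_(size ys) -> R, x = \sum_(i < size ys) c i * ys`_i.
Proof.
move=> hN hI; have [ys hys] := hN I hI.
exists ys; split=> [_ /(nthP 0) [j hj <-] | x /hys //].
apply/hys; exists (fun i => if i == Ordinal hj then 1 else 0).
rewrite (bigD1 (Ordinal hj)) //= eqxx mul1r big1 ?addr0 // => i /negbTE ->.
by rewrite mul0r.
Qed.

Section Noetherian.
Context {R : comNzRingType} {L : lmodType R}.
Implicit Types (S : L -> Prop) (gs : seq L).

Definition lead_coef_ideal S (g : L) gs (a : R) : Prop :=
  exists2 s, S s & lin_span gs (s - a *: g).

Lemma lead_coef_ideal_is_ideal {S} g gs : is_submod S -> is_ideal (lead_coef_ideal S g gs).
Proof.
move=> SS; have Sgs := submod_span gs; split.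
  by exists 0; [exact: (submod0 SS) | rewrite scale0r subr0; exact: (submod0 Sgs)].
split=> [a1 a2 [s1 S1 gs1] [s2 S2 gs2] | r a [s Ss gss]].
  exists (s1 + s2); first exact: (submodD SS).
  by rewrite scalerDl opprD addrACA; apply: (submodD Sgs).
exists (r *: s); first exact: (submodZ SS).
by rewrite -scalerA -scalerBr; apply: (submodZ Sgs).
Qed.

Lemma noetherian_submod_fin_gen : noetherian_ring R -> forall gs S,
  is_submod S -> psubset S (lin_span gs) ->
  exists ns : seq L, {in ns, forall n, S n} /\ psubset S (lin_span ns).
Proof.
move=> hN; elim=> [|g gs IH] S SS Sgs; first by exists [::].
have Sgs' := submod_span gs.
have [ys [Iys Igen]] := noetherian_ideal_gens hN (lead_coef_ideal_is_ideal g gs SS).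
pose P a s := S s /\ lin_span gs (s - a *: g).
pose w a := epsilon (inhabits 0) (P a).
have wP a : lead_coef_ideal S g gs a -> P a (w a).
  by move=> [s Ss gss]; apply: epsilon_spec; exists s.
have [ns [Sns Sgs_ns]] :=
  IH (fun v => S v /\ lin_span gs v) (submod_meet SS Sgs') (fun v => @proj2 _ _).
have Sw : {in map w ys, forall n, S n}.
  by move=> _ /mapP [y ys_y ->]; case: (wP y (Iys y ys_y)).
exists (map w ys ++ ns); split=> [n|v Sv].
  by rewrite mem_cat => /orP [/Sw | /Sns []].
have [a [u [gsu ev]]] := Sgs v Sv.
have [c ea] : exists c : 'I_(size ys) -> R, a = \sum_(i < size ys) c i * ys`_i.
  by apply: Igen; exists v; rewrite // ev [a *: g + u]addrC addrK.
pose t := \sum_(i < size ys) c i *: w ys`_i.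
have wt : lin_span (map w ys) t by apply: span_map_sum.
have gst : lin_span gs (t - a *: g).
  rewrite ea scaler_suml -sumrB; apply: (submod_sum Sgs') => i.
  rewrite -scalerA -scalerBr; apply: (submodZ Sgs').
  by case: (wP _ (Iys _ (mem_nth 0 (ltn_ord i)))).
rewrite -(subrK t v) addrC; apply: span_cat => //; apply: Sgs_ns; split.
  by apply: (submodB SS) => //; apply: (span_min SS Sw).
have -> : v - t = (v - a *: g) - (t - a *: g) by rewrite opprB addrA subrK.
by apply: (submodB Sgs') => //; rewrite ev [a *: g + u]addrC addrK.
Qed.

End Noetherian.

Section FiniteExtensions.
Context {R : comNzRingType} {L : lmodType R}.
Implicit Types (K B : L -> Prop) (zs : seq L).

Definition finite_length_ext B := forall K, is_submod K ->
  exists n, length_le K (sum_sub K B) n.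

Lemma sum_sub_span_nil {K} : is_submod K -> pequiv K (sum_sub K (lin_span [::])).
Proof.
move=> SK; split=> [|_ [a [b [Ka [/= -> ->]]]]]; last by rewrite addr0.
by apply: sum_subl; apply: submod_span.
Qed.

Lemma sum_sub_span_cons K z zs :
  pequiv (sum_sub (sum_sub K (lin_span zs)) (cyclic_sub z)) (sum_sub K (lin_span (z :: zs))).
Proof.
split=> x.
  move=> [_ [_ [[k [s [Kk [zs_s ->]]]] [[a ->] ->]]]].
  by exists k, (a *: z + s); split=> //; split; [exists a, s | rewrite addrAC addrA].
move=> [k [_ [Kk [[a [s [zs_s ->]]] ->]]]].
by exists (k + s), (a *: z); split; [exists k, s | split; [exists a | rewrite addrCA addrC]].
Qed.

Lemma finite_length_ext_span {zs} :
  {in zs, forall z, finite_length_ext (cyclic_sub z)} -> finite_length_ext (lin_span zs).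
Proof.
elim: zs => [|z zs IH] zs_fin K SK.
  by exists 0%N; apply: (length_le_equiv (pequiv_refl K) (sum_sub_span_nil SK) (length_le_refl K)).
have SKzs : is_submod (sum_sub K (lin_span zs)) := submod_sum_sub SK (submod_span zs).
have [n1 H1] : exists n, length_le K (sum_sub K (lin_span zs)) n.
  by apply: IH SK => x zs_x; apply: zs_fin; rewrite in_cons zs_x orbT.
have [n2 H2] := zs_fin z (mem_head z zs) _ SKzs.
exists (n1 + n2)%N; apply: (length_le_equiv (pequiv_refl K) (sum_sub_span_cons K z zs)).
apply: (length_le_trans SKzs _ _ _ H1 H2).
- exact: (submod_sum_sub SKzs (submod_cyclic z)).
- exact: (sum_subl (submod_span zs)).
- exact: (sum_subl (submod_cyclic z)).
Qed.

Definition killed_by (m : R -> Prop) (e : nat) (v : L) : Prop :=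
  forall s : seq R, size s = e -> (forall i, (i < e)%N -> m s`_i) -> (\prod_(a <- s) a) *: v = 0.

Lemma span_scaled_cyclic (v : L) (ys : seq R) :
  psubset (lin_span (map (fun y => y *: v) ys)) (cyclic_sub v).
Proof.
elim: ys => [|y ys IH] x /=; first by move=> ->; exists 0; rewrite scale0r.
move=> [a [u [ys_u ->]]]; have [b ->] := IH u ys_u.
by exists (a * y + b); rewrite scalerDl scalerA.
Qed.

Lemma killed_finite_length_ext {m : R -> Prop} {e v} : noetherian_ring R ->
  local_with_max m -> killed_by m e v -> finite_length_ext (cyclic_sub v).
Proof.
move=> hN hL; have [mI _] := hL.
have [ys [mys mgen]] := noetherian_ideal_gens hN mI.
elim: e v => [|e IH] v kv K SK.
  have v0 : v = 0.
    by have := kv [::] erefl (fun i => @False_ind _ \o notF); rewrite big_nil scale1r.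
  exists 0%N; apply: (length_le_equiv (pequiv_refl K) _ (length_le_refl K)).
  split; first exact: (sum_subl (submod_cyclic v)).
  by move=> _ [k [_ [Kk [[a ->] ->]]]]; rewrite v0 scaler0 addr0.
pose zs := map (fun y => y *: v) ys.
have zs_fin : {in zs, forall z, finite_length_ext (cyclic_sub z)}.
  move=> _ /mapP [y ys_y ->]; apply: IH => s size_s ms.
  rewrite scalerA.
  have -> : \prod_(a <- s) a * y = \prod_(a <- y :: s) a by rewrite big_cons mulrC.
  by apply: kv => [|[|i] hi] /=; rewrite ?size_s //; [apply: mys | apply: ms].
have SKzs : is_submod (sum_sub K (lin_span zs)) := submod_sum_sub SK (submod_span zs).
have [n H1] := finite_length_ext_span zs_fin K SK.
have mv a : m a -> sum_sub K (lin_span zs) (a *: v).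
  move=> ma; have [c ->] := mgen a ma.
  exists 0, (\sum_(i < size ys) c i *: (ys`_i *: v)); split; first exact: (submod0 SK).
  split; first exact: (span_map_sum (fun y => y *: v) 0 ys c).
  by rewrite add0r scaler_suml; apply: eq_bigr => i _; rewrite scalerA.
have H2 := length_le_cyclic_max hL SKzs mv.
have SKzsv := submod_sum_sub SKzs (submod_cyclic v).
exists (n + 1)%N; apply: (length_le_equiv (pequiv_refl K)); last first.
  apply: (length_le_trans SKzs SKzsv _ _ H1 H2).
    exact: (sum_subl (submod_span zs)).
  exact: (sum_subl (submod_cyclic v)).
split=> [x|]; last exact: (sum_subSl _ (sum_subl (submod_span zs))).
move=> [_ [_ [[k [s [Kk [zs_s ->]]]] [[a ->] ->]]]].
have [b ->] := span_scaled_cyclic v ys s zs_s.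
by exists k, ((b + a) *: v); split=> //; split; [exists (b + a) | rewrite scalerDl addrA].
Qed.

End FiniteExtensions.

Section SeqMulMod.
Context {R : comNzRingType} {L : lmodType R}.
Implicit Types (xs : seq R).

(* [mul_mod xs] is (x_1, ..., x_k) L, like [seq_mul_mod xs], in a form suited to
   induction on [xs]. *)
Fixpoint mul_mod xs : L -> Prop :=
  if xs is x :: xs' then fun v => exists u k, mul_mod xs' k /\ v = x *: u + k
  else fun v => v = 0.

Lemma submod_mul_mod xs : is_submod (mul_mod xs).
Proof.
elim: xs => [|x xs IH] /=.
  by split=> //; split=> [u v -> ->|r v ->]; rewrite ?addr0 ?scaler0.
split; first by exists 0, 0; rewrite scaler0 addr0; split; first exact: (submod0 IH).
split=> [u v [a [u1 [H1 ->]]] [b [v1 [H2 ->]]] | r v [a [u1 [H1 ->]]]].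
  by exists (a + b), (u1 + v1); rewrite scalerDr addrACA; split; first exact: (submodD IH).
exists (r *: a), (r *: u1); rewrite scalerDr !scalerA mulrC.
by split; first exact: (submodZ IH).
Qed.

Lemma seq_mul_modE xs v : seq_mul_mod xs v <-> mul_mod xs v.
Proof.
elim: xs v => [|x xs IH] v.
  split=> [[ls ->] | /= ->]; first by rewrite big_ord0.
  by exists (fun _ => 0); rewrite big_ord0.
split=> [[ls ->] | [u [k [xs_k ->]]]].
  rewrite big_ord_recl; exists (ls ord0), (\sum_(i < size xs) xs`_i *: ls (lift ord0 i)).
  by split=> //; apply/IH; exists (fun i => ls (lift ord0 i)).
have [ls ->] := (IH k).2 xs_k.
exists (fun i : 'I_(size xs).+1 => if unlift ord0 i is Some j then ls j else u).
rewrite big_ord_recl /= unlift_none; congr (_ + _).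
by apply: eq_bigr => i _; rewrite liftK.
Qed.

Lemma mul_mod_cat xs1 xs2 v :
  mul_mod (xs1 ++ xs2) v <-> exists v1 v2, mul_mod xs1 v1 /\ mul_mod xs2 v2 /\ v = v1 + v2.
Proof.
elim: xs1 v => [|x xs1 IH] v /=.
  by split=> [xs2_v | [_ [v2 [-> [xs2_v2 ->]]]]]; [exists 0, v; rewrite add0r | rewrite add0r].
split=> [[u [k [xs_k ->]]] | [_ [v2 [[u [k [xs1_k ->]]] [xs2_v2 ->]]]]].
  have [v1 [v2 [xs1_v1 [xs2_v2 ->]]]] := (IH k).1 xs_k.
  by exists (x *: u + v1), v2; split; [exists u, v1 | split=> //; rewrite addrA].
by exists u, (k + v2); rewrite addrA; split=> //; apply/IH; exists k, v2.
Qed.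

Lemma mul_mod_mid pre post (y : R) (u : L) : mul_mod (pre ++ y :: post) (y *: u).
Proof.
apply/mul_mod_cat; exists 0, (y *: u); rewrite add0r.
split; first exact: (submod0 (submod_mul_mod pre)).
by split=> //; exists u, 0; rewrite addr0; split; first exact: (submod0 (submod_mul_mod post)).
Qed.

End SeqMulMod.

Section SeqMulModMaps.
Context {R : comNzRingType} {L L' : lmodType R} (g : {linear L -> L'}).

Lemma mul_mod_map xs u : mul_mod xs u -> mul_mod xs (g u).
Proof.
elim: xs u => [|x xs IH] u /=; first by move=> ->; rewrite linear0.
move=> [u1 [k [xs_k ->]]]; exists (g u1), (g k).
by rewrite linearD linearZZ; split; first exact: IH.
Qed.

Lemma mul_mod_lift xs w : (forall w, exists v, g v = w) ->
  mul_mod xs w -> exists2 u, mul_mod xs u & g u = w.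
Proof.
move=> g_surj; elim: xs w => [|x xs IH] w /=; first by move=> ->; exists 0; rewrite ?linear0.
move=> [u1 [k [xs_k ->]]]; have [v <-] := g_surj u1; have [k' xs_k' <-] := IH k xs_k.
by exists (x *: v + k'); [exists v, k' | rewrite linearD linearZZ].
Qed.

End SeqMulModMaps.

Lemma prime_ideal_expr {R : comNzRingType} {P : R -> Prop} {x : R} {e} :
  prime_ideal P -> P (x ^+ e) -> P x.
Proof.
move=> [_ [P1 Pmul]]; elim: e => [|e IH]; first by rewrite expr0.
by rewrite exprS => /Pmul [].
Qed.

Lemma local_proper_sub {R : comNzRingType} {m I : R -> Prop} :
  local_with_max m -> is_ideal I -> ~ I 1 -> psubset I m.
Proof.
move=> [_ [_ unit]] [_ [_ IZ]] nI1 x Ix; apply: NNPP => /unit [y xy].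
by apply: nI1; rewrite -xy mulrC; apply: IZ.
Qed.

Section Annihilators.
Context {R : comNzRingType} {M : lmodType R}.

Lemma killed_by_expr {m : R -> Prop} {e} {v : M} {y} : killed_by m e v -> m y -> y ^+ e *: v = 0.
Proof.
move=> kv my; have := kv (nseq e y) (size_nseq e y).
by rewrite big_nseq iter_mulr_1; apply=> i hi; rewrite nth_nseq hi.
Qed.

Lemma H0m_scale_ann (m : R -> Prop) (a x : R) : fin_gen_mod M ->
  (forall v : M, H0m m (a *: v)) -> m x -> exists E, ann_mod M (x ^+ E * a).
Proof.
move=> /fin_gen_span [gs gs_span] aH0 mx.
suff [E xEa] : exists E, forall v, lin_span gs v -> x ^+ E *: (a *: v) = 0.
  by exists E => v; rewrite -scalerA; apply/xEa/gs_span.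
elim: gs {gs_span} => [|g gs [E xEa]]; first by exists 0%N => v /= ->; rewrite !scaler0.
have [e kag] := aH0 g.
exists (e + E)%N => _ /= [b [u [gs_u ->]]].
have k1 := killed_by_expr kag mx; have k2 := xEa u gs_u.
rewrite scalerA in k1; rewrite scalerA in k2; rewrite !scalerDr !scalerA.
have -> : x ^+ (e + E) * a * b = x ^+ E * b * (x ^+ e * a) by rewrite exprD; ring.
have -> : x ^+ (e + E) * a = x ^+ e * (x ^+ E * a) by rewrite exprD; ring.
by rewrite -scalerA k1 scaler0 add0r -scalerA k2 scaler0.
Qed.

End Annihilators.

Section FiniteColength.
Context {R : comNzRingType} {L : lmodType R}.
Implicit Types (xs pre post : seq R).

Lemma quot_fin_length_mul_modE xs : quot_fin_length (seq_mul_mod (L:=L) xs) <->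
  exists n, length_le (mul_mod (L:=L) xs) total_sub n.
Proof.
split=> [[n fin] | [n fin]]; exists n => X k HX HS; [apply: fin HS | apply: fin _ HS] => i hi.
  by have [SXi [xsX _]] := HX i hi; split=> // v /seq_mul_modE; apply: xsX.
by have [SXi xsX] := HX i hi; split=> //; split=> // v /seq_mul_modE; apply: xsX.
Qed.

Lemma mul_mod_exprS pre post y t :
  psubset (mul_mod (L:=L) (pre ++ y ^+ t.+1 :: post)) (mul_mod (pre ++ y ^+ t :: post)).
Proof.
move=> v /mul_mod_cat [v1 [v2 [pre_v1 [[u [k [post_k ->]]] ->]]]].
apply/mul_mod_cat; exists v1, (y ^+ t *: (y *: u) + k); split=> //; split.
  by exists (y *: u), k.
by rewrite scalerA -exprSr.
Qed.

Lemma mul_mod_expr_scale pre post y t u : mul_mod (pre ++ y :: post) u ->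
  mul_mod (L:=L) (pre ++ y ^+ t.+1 :: post) (y ^+ t *: u).
Proof.
move=> /mul_mod_cat [v1 [v2 [pre_v1 [[u' [k [post_k ->]]] ->]]]].
apply/mul_mod_cat; exists (y ^+ t *: v1), (y ^+ t.+1 *: u' + y ^+ t *: k); split.
  exact: (submodZ (submod_mul_mod pre)).
split; first by exists u', (y ^+ t *: k); split=> //; exact: (submodZ (submod_mul_mod post)).
by rewrite !scalerDr scalerA -exprSr.
Qed.

Lemma mul_mod_expr_sum pre post y t :
  pequiv (sum_sub (mul_mod (pre ++ y ^+ t.+1 :: post))
                  (range_sub ( *:%R (y ^+ t) : {linear L -> L})))
    (mul_mod (pre ++ y ^+ t :: post)).
Proof.
split=> z; first move=> [k [w [k_in [[u ->] ->]]]].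
  by apply: (submodD (submod_mul_mod _)); [exact: mul_mod_exprS | exact: mul_mod_mid].
move=> /mul_mod_cat [v1 [v2 [pre_v1 [[u [k [post_k ->]]] ->]]]].
exists (v1 + k), (y ^+ t *: u); split; last by split; [exists u | rewrite addrAC addrA].
apply/mul_mod_cat; exists v1, k; split=> //; split=> //.
by exists 0, k; rewrite scaler0 add0r.
Qed.

(* Multiplication by y^t maps M/(pre, y, post)M onto the layer
   (pre, y^t, post)M / (pre, y^(t+1), post)M. *)
Lemma length_le_mul_mod_expr pre post y n t : (0 < t)%N ->
  length_le (mul_mod (L:=L) (pre ++ y :: post)) total_sub n ->
  length_le (mul_mod (L:=L) (pre ++ y ^+ t :: post)) total_sub (n * t).
Proof.
move=> + fin; elim: t => [//|[|t] IH] _; first by rewrite expr1 muln1.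
rewrite mulnS; apply: (length_le_trans (submod_mul_mod _) submod_total _ _ _ (IH isT)) => //.
  exact: mul_mod_exprS.
apply: (length_le_equiv (pequiv_refl _) (mul_mod_expr_sum pre post y t.+1)).
by apply: (length_le_preimage _ (submod_mul_mod _) _ fin) => u; apply: mul_mod_expr_scale.
Qed.

End FiniteColength.

Section QuotientByH0.
Context {R : comNzRingType} (m : R -> Prop) {M Q : lmodType R} (f : {linear M -> Q}).
Hypotheses (f_surj : forall w, exists v, f v = w) (kerH0 : forall v, f v = 0 -> H0m m v).

Lemma ann_mod_surj r : ann_mod M r -> ann_mod Q r.
Proof. by move=> annr w; have [v <-] := f_surj w; rewrite -linearZZ annr linear0. Qed.

Lemma ann_quot_sub_prime (P : R -> Prop) x : fin_gen_mod M ->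
  prime_ideal P -> psubset (ann_mod M) P -> m x -> ~ P x -> psubset (ann_mod Q) P.
Proof.
move=> Mfg Pprime annP mx nPx a annQa.
have [|E annE] := H0m_scale_ann m a x Mfg _ mx.
  by move=> v; apply: kerH0; rewrite linearZZ annQa.
have [_ [_ Pmul]] := Pprime.
by case: (Pmul _ _ (annP _ annE)) => // /(prime_ideal_expr Pprime).
Qed.

Lemma mod_dim_lift d : local_with_max m -> fin_gen_mod M -> mod_dim Q d -> mod_dim M d.
Proof.
move=> mloc Mfg [[P0 [P0ch P0strict]] no_longer]; split.
  exists P0; split=> // i hi; have [P0prime annP0] := P0ch i hi.
  by split=> // r /ann_mod_surj; apply: annP0.
move=> [P [Pch Pstrict]]; apply: no_longer; exists P; split=> // i hi.
have [Pprime annP] := Pch i hi; split=> //.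
have annQ j : (j < d.+1)%N -> psubset (ann_mod Q) (P j).
  move=> hj; have [Psub [x [Px nPx]]] := Pstrict j hj.
  have [[Pideal [P1 _]] _] := Pch j.+1 hj.
  have [Pjprime annPj] := Pch j (ltnW hj).
  exact: (ann_quot_sub_prime _ _ Mfg Pjprime annPj (local_proper_sub mloc Pideal P1 x Px) nPx).
move: hi; rewrite leq_eqVlt => /orP [/eqP ->|hi]; last exact: annQ.
by move=> r /(annQ d (ltnSn d)); apply: (Pstrict d (ltnSn d)).1.
Qed.

Lemma quot_fin_length_lift xs : noetherian_ring R -> local_with_max m -> fin_gen_mod M ->
  quot_fin_length (seq_mul_mod (L:=Q) xs) -> quot_fin_length (seq_mul_mod (L:=M) xs).
Proof.
move=> hN mloc Mfg /quot_fin_length_mul_modE [nQ finQ]; apply/quot_fin_length_mul_modE.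
pose K := mul_mod (L:=M) xs; pose ker v := f v = 0.
have SK : is_submod K := submod_mul_mod xs.
have Sker : is_submod ker.
  split; first exact: linear0.
  by split=> [u v fu fv | r v fv]; rewrite /ker ?linearD ?linearZZ ?fu ?fv ?addr0 ?scaler0.
have SKker := submod_sum_sub SK Sker.
have fin_top : length_le (sum_sub K ker) total_sub nQ.
  apply: (length_le_image f _ _ finQ) => [u fu | w /(mul_mod_lift f xs w f_surj) [u xs_u <-]].
    by exists 0, u; rewrite add0r; split=> //; exact: (submod0 SK).
  by exists u => //; apply: (sum_subl Sker).
have [gs gs_span] := fin_gen_span Mfg.
have [ns [ker_ns ker_span]] := noetherian_submod_fin_gen hN gs _ Sker (fun v _ => gs_span v).
have ns_fin : {in ns, forall n, finite_length_ext (cyclic_sub n)}.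
  by move=> n /ker_ns /kerH0 [e ke]; apply: (killed_finite_length_ext hN mloc ke).
have [b fin_bot] := finite_length_ext_span ns_fin K SK.
exists (b + nQ)%N; apply: (length_le_trans SKker submod_total (sum_subl Sker) _ _ fin_top) => //.
apply: (length_le_equiv (pequiv_refl K) _ fin_bot).
by split; apply: sum_subSr; [apply: (span_min Sker ker_ns) | apply: ker_span].
Qed.

Lemma sop_lift pre post y t : noetherian_ring R -> local_with_max m -> fin_gen_mod M ->
  (0 < t)%N -> is_sop Q m (pre ++ y :: post) -> is_sop M m (pre ++ y ^+ t :: post).
Proof.
move=> hN mloc Mfg t_gt0 [dimQ [/(forall_nth_mem 0) xs_m finQ]].
split; first by move: dimQ; rewrite !size_cat; apply: mod_dim_lift.
split.
  apply/(forall_nth_mem 0) => x; rewrite mem_cat in_cons => /or3P [x_pre|/eqP ->|x_post].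
  - by apply: xs_m; rewrite mem_cat x_pre.
  - have [[_ [_ mmul]] _] := mloc; rewrite -(prednK t_gt0) exprSr; apply: mmul.
    by apply: xs_m; rewrite mem_cat mem_head orbT.
  - by apply: xs_m; rewrite mem_cat in_cons x_post !orbT.
have /quot_fin_length_mul_modE [n fin] := quot_fin_length_lift _ hN mloc Mfg finQ.
by apply/quot_fin_length_mul_modE; exists (n * t)%N; apply: length_le_mul_mod_expr.
Qed.

End QuotientByH0.

Theorem lemma2p14 (R : comNzRingType) (m : R -> Prop) (M : lmodType R)
    (N : M -> Prop) (Q : lmodType R) (f : {linear M -> Q}) :
  noetherian_ring R -> local_with_max m -> fin_gen_mod M ->
  is_submod N -> (forall v, N v -> H0m m v) ->
  (forall w : Q, exists v : M, f v = w) ->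
  (forall v : M, f v = 0 <-> N v) ->
  forall r : R, b_ideal M m r -> b_ideal Q m r.
Proof.
move=> hN mloc Mfg _ NH0 f_surj kerN r br xs xs_sop i i_lt w /seq_mul_modE pre_yw.
have kerH0 v : f v = 0 -> H0m m v by move=> /kerN; apply: NH0.
set y := xs`_i in pre_yw *; set pre := take i xs in pre_yw *; set post := drop i.+1 xs.
have xsE : xs = pre ++ y :: post by rewrite /pre /post /y -drop_nth // cat_take_drop.
have my : m y by case: xs_sop => _ [xs_m _]; apply: xs_m.
have [v fv] := f_surj w.
have [u pre_u fu] := mul_mod_lift f pre (y *: w) f_surj pre_yw.
have [e ke] : H0m m (y *: v - u) by apply: kerH0; rewrite linearB linearZZ fv fu subrr.
have pre_yv : mul_mod pre (y ^+ e.+1 *: v).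
  have -> : y ^+ e.+1 *: v = y ^+ e *: u.
    by rewrite exprSr -scalerA -[y *: v](subrK u) scalerDr (killed_by_expr ke my) add0r.
  exact: (submodZ (submod_mul_mod pre)).
have xs'_sop : is_sop M m (pre ++ y ^+ e.+1 :: post).
  by apply: (sop_lift _ _ f_surj kerH0) => //; rewrite -xsE.
have size_pre : size pre = i by rewrite size_take i_lt.
have i_lt' : (i < size (pre ++ y ^+ e.+1 :: post))%N.
  by rewrite size_cat size_pre -addSnnS leq_addr.
have := br _ xs'_sop i i_lt' v; rewrite -size_pre take_size_cat // nth_cat ltnn subnn.
move=> /(_ ((seq_mul_modE _ _).2 pre_yv)) /seq_mul_modE pre_rv.
by apply/seq_mul_modE; rewrite -fv -linearZZ; apply: mul_mod_map.
Qed.
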